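(* Let $L$ be a Lelek fan with top $v$ and let $W$ be a wedge in $L$. Then there is a retraction from $L$ onto $W$.
   Context: A continuum is a nonempty compact connected metric space. A dendroid is an arcwise connected, hereditarily unicoherent continuum. A point $x$ of a dendroid $X$ is a ramification point if $x$ is the top (the branch point) of some simple triod in $X$. A fan is a dendroid with at most one ramification point; this point, if it exists, is called the top of the fan. For a fan $X$, a point $x$ is an end point of $X$ if $x$ is an end point of every arc in $X$ containing $x$; $E(X)$ denotes the set of end points of $X$. A fan $X$ with top $v$ is smooth if for every $x\in X$ and every sequence $x_n\to x$ in $X$, the arcs from $v$ to $x_n$ converge (in the Hausdorff metric) to the arc from $v$ to $x$. A Lelek fan is a smooth fan $X$ with $\mathrm{Cl}(E(X))=X$. If $L$ is a Lelek fan with top $v$, a subcontinuum $W\subseteq L$ is a wedge in $L$ if both $W$ and $(L\setminus W)\cup\{v\}$ are Lelek fans. A retraction from a space $X$ onto a subspace $Y$ is a continuous map $r:X\to Y$ with $r(y)=y$ for all $y\in Y$. *)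

From HB Require Import structures.
From mathcomp Require Import all_boot all_order all_algebra.
From mathcomp Require Import all_classical all_reals all_analysis.
Set Implicit Arguments. Unset Strict Implicit. Unset Printing Implicit Defensive.
Import Order.TTheory GRing.Theory Num.Theory.
Import numFieldNormedType.Exports.
Local Open Scope classical_set_scope.
Local Open Scope ring_scope.

Section Continua.
Variables (R : realType) (T : pseudoMetricType R).

Definition unitI : set R := `[0, 1]%classic.

(* f : [0,1] -> B is a homeomorphism with inverse g *)
Definition arc_param (B : set T) (f : R -> T) (g : T -> R) : Prop :=
  [/\ {within unitI, continuous f}, {within B, continuous g},
      (forall t, unitI t -> B (f t)), (forall x, B x -> unitI (g x)) &
      ((forall t, unitI t -> g (f t) = t) /\ (forall x, B x -> f (g x) = x))].

Definition is_arc (B : set T) : Prop := exists f g, arc_param B f g.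

Definition arc_from_to (B : set T) (x y : T) : Prop :=
  exists f g, arc_param B f g /\ f 0 = x /\ f 1 = y.

Definition arc_endpoint (B : set T) (x : T) : Prop :=
  exists y, arc_from_to B x y.

Definition continuum (A : set T) : Prop :=
  [/\ A !=set0, compact A & connected A].

Definition arcwise_connected (A : set T) : Prop :=
  forall x y, A x -> A y -> x <> y -> exists B, B `<=` A /\ arc_from_to B x y.

Definition hereditarily_unicoherent (A : set T) : Prop :=
  forall P Q, P `<=` A -> Q `<=` A -> continuum P -> continuum Q ->
    connected (P `&` Q).

Definition dendroid (A : set T) : Prop :=
  [/\ continuum A, arcwise_connected A & hereditarily_unicoherent A].

Definition simple_triod (S : set T) (x : T) : Prop :=
  exists B1 B2 B3 y1 y2 y3,
    [/\ arc_from_to B1 x y1, arc_from_to B2 x y2, arc_from_to B3 x y3,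
        S = B1 `|` B2 `|` B3 &
        [/\ B1 `&` B2 = [set x], B1 `&` B3 = [set x] & B2 `&` B3 = [set x]]].

Definition ramification_point (A : set T) (x : T) : Prop :=
  exists S, S `<=` A /\ simple_triod S x.

Definition fan (A : set T) : Prop :=
  dendroid A /\ (forall x y, ramification_point A x -> ramification_point A y -> x = y).

Definition fan_with_top (A : set T) (v : T) : Prop :=
  fan A /\ ramification_point A v.

Definition end_point (A : set T) (x : T) : Prop :=
  A x /\ forall B, B `<=` A -> is_arc B -> B x -> arc_endpoint B x.

Definition end_points (A : set T) : set T := [set x | end_point A x].

Definition varc (A : set T) (v x : T) (I : set T) : Prop :=
  I `<=` A /\ (if pselect (x = v) then I = [set v] else arc_from_to I v x).

Definition hausdorff_cvg (K : nat -> set T) (K0 : set T) : Prop :=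
  forall e : R, 0 < e -> exists N : nat, forall n, (N <= n)%N ->
    (forall y, K n y -> exists z, K0 z /\ ball z e y) /\
    (forall z, K0 z -> exists y, K n y /\ ball y e z).

Definition smooth_fan (A : set T) (v : T) : Prop :=
  fan_with_top A v /\
  forall x (u : nat -> T), A x -> (forall n, A (u n)) -> u @ \oo --> x ->
    forall I (In : nat -> set T), varc A v x I -> (forall n, varc A v (u n) (In n)) ->
      hausdorff_cvg In I.

Definition lelek_fan (A : set T) (v : T) : Prop :=
  smooth_fan A v /\ closure (end_points A) = A.

Definition wedge (L : set T) (v : T) (W : set T) : Prop :=
  [/\ W `<=` L, continuum W, (exists w, lelek_fan W w) &
      (exists w, lelek_fan ((L `\` W) `|` [set v]) w)].

Definition retraction (X Y : set T) (r : T -> T) : Prop :=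
  [/\ {within X, continuous r}, (forall x, X x -> Y (r x)) & (forall y, Y y -> r y = y)].

End Continua.

From HB Require Import structures.
From mathcomp Require Import all_boot all_order all_algebra.
From mathcomp Require Import all_classical all_reals all_analysis.
Import Order.TTheory GRing.Theory Num.Theory.
Import numFieldNormedType.Exports.
Set Implicit Arguments. Unset Strict Implicit.
Local Open Scope classical_set_scope.

(* In a Hausdorff space the wedge W and its complementary fan
   V = (L \ W) u {v} are compact, hence closed, and they cover L.  They meet
   at most in v, and by connectedness of L they must meet there: otherwise
   they would split L.  Collapsing V to v and fixing W is therefore
   continuous on L by the pasting lemma, and it retracts L onto W. *)

Section Collapse.
Variable T : topologicalType.

Definition collapse (A : set T) (p x : T) : T := if pselect (A x) then x else p.

Lemma collapse_id A p x : A x -> collapse A p x = x.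
Proof. by rewrite /collapse; case: pselect. Qed.

Lemma collapse_out A p x : ~ A x -> collapse A p x = p.
Proof. by rewrite /collapse; case: pselect. Qed.

Lemma connected_closed_cover (X A B : set T) :
  connected X -> closed A -> closed B -> A `<=` X -> X `<=` A `|` B ->
  A `&` B = set0 -> A !=set0 -> A = X.
Proof.
move=> Xconn cA cB AX XAB AB0 A0; apply: Xconn => //.
  exists (~` B); first exact: closed_openC.
  apply/seteqP; split => [x Ax|x [Xx nBx]]; first split; first exact: AX.
    by move=> Bx; rewrite -[False]/(set0 x) -AB0.
  by have [|//] := XAB x Xx.
by exists A => //; apply/seteqP; split => [x Ax|x []//]; split => //; exact: AX.
Qed.

Lemma collapse_continuous (A B : set T) (p : T) :
  closed A -> closed B -> A `&` B `<=` [set p] -> A p ->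
  {within A `|` B, continuous collapse A p}.
Proof.
move=> cA cB ABp Ap.
have idA : {within A, continuous id} by apply: continuous_subspaceT => x; exact: cvg_id.
have cstB : {within B, continuous (fun=> p)}.
  by apply: continuous_subspaceT => x; exact: cvg_cst.
apply: withinU_continuous => //.
  refine (subspace_eq_continuous _ idA) => x; rewrite inE => Ax.
  by rewrite /from_subspace collapse_id.
refine (subspace_eq_continuous _ cstB) => x; rewrite inE => Bx /=.
rewrite /from_subspace; have [Ax|nAx] := pselect (A x); last by rewrite collapse_out.
by rewrite collapse_id //; exact/esym/ABp.
Qed.

End Collapse.

Section LelekFans.
Variables (R : realType) (T : pseudoMetricType R).
Implicit Types (A L W : set T) (v x y : T).

Lemma collapse_retraction (X A B : set T) (p : T) :
  closed A -> closed B -> X `<=` A `|` B -> A `&` B `<=` [set p] -> A p ->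
  retraction X A (collapse A p).
Proof.
move=> cA cB XAB ABp Ap; split.
- apply: (continuous_subspaceW (B := A `|` B)) XAB _.
  exact: collapse_continuous.
- by move=> x _; have [Ax|nAx] := pselect (A x); [rewrite collapse_id|rewrite collapse_out].
- by move=> y Ay; rewrite collapse_id.
Qed.

Lemma arc_from_to_start A x y : arc_from_to A x y -> A x.
Proof.
move=> [f [g [[_ _ fA _ _] [<- _]]]]; apply: fA.
by rewrite /unitI /= in_itv /= lexx ler01.
Qed.

Lemma ramification_point_mem A x : ramification_point A x -> A x.
Proof.
move=> [S [SA [B1 [B2 [B3 [y1 [y2 [y3 [B1x _ _ SB _]]]]]]]]].
by apply: SA; rewrite SB; left; left; exact: arc_from_to_start B1x.
Qed.

Lemma lelek_fan_continuum L v : lelek_fan L v -> continuum L.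
Proof. by move=> [[[[[]]]]]. Qed.

Lemma lelek_fan_top L v : lelek_fan L v -> L v.
Proof. by move=> [[[_ /ramification_point_mem]]]. Qed.

Lemma continuum_closed A : hausdorff_space T -> continuum A -> closed A.
Proof. by move=> hT [_ Ac _]; exact: compact_closed. Qed.

Lemma wedge_complement_closed L v W :
  hausdorff_space T -> wedge L v W -> closed ((L `\` W) `|` [set v]).
Proof.
by move=> hT [_ _ _ [w /lelek_fan_continuum]]; exact: continuum_closed.
Qed.

Lemma wedge_cover L v W : L `<=` W `|` ((L `\` W) `|` [set v]).
Proof. by move=> x Lx; have [|] := pselect (W x); [left|right; left]. Qed.

Lemma wedge_top_mem L v W :
  hausdorff_space T -> lelek_fan L v -> wedge L v W -> W v.
Proof.
move=> hT Lfan Wwedge; have [WL Wc _ _] := Wwedge.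
apply: contrapT => nWv.
have [W0 _ _] := Wc; have [_ _ Lconn] := lelek_fan_continuum Lfan.
suff WeL : W = L by apply: nWv; rewrite WeL; exact: lelek_fan_top Lfan.
apply: (connected_closed_cover (B := (L `\` W) `|` [set v])) => //.
- exact: continuum_closed.
- exact: wedge_complement_closed Wwedge.
- exact: wedge_cover.
- by apply/seteqP; split => x // [Wx [[_ /(_ Wx)]|xv]] //; apply: nWv; rewrite -xv.
Qed.

End LelekFans.

Theorem mainTheorem7 (R : realType) (T : pseudoMetricType R)
    (hT : hausdorff_space T) (L W : set T) (v : T) :
  lelek_fan L v -> wedge L v W -> exists r : T -> T, retraction L W r.
Proof.
move=> Lfan Wwedge; exists (collapse W v).
have [_ Wc _ _] := Wwedge.
apply: (collapse_retraction (B := (L `\` W) `|` [set v])).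
- exact: continuum_closed.
- exact: wedge_complement_closed Wwedge.
- exact: wedge_cover.
- by move=> x [Wx [[_ /(_ Wx)]|]].
- exact: wedge_top_mem Lfan Wwedge.
Qed.
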